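(* Let $H$ be a component of $G[\overline{C}]$, and let $v_1,v_2$ be the unique neighbors in $H$ of $x_1,x_2$ respectively. Then $H$ is a $v_1,v_2$-path.
   Context: All graphs are simple. $\mathcal{G}^*$ denotes the class of graphs in which any two distinct odd cycles share at most one edge. Standing setting: $G\in\mathcal{G}^*$ is $2$-connected, and $C$ is a longest odd cycle of $G$ with $|C|\ge 5$. We also write $C$ for its vertex set. Let $\overline{C}=V(G)\setminus C$, assumed nonempty. For $v\in\overline{C}$ and $w\in C$, $v$ touches $w$ if there is a $v,w$-path meeting $C$ only at $w$. $T(v)=\{w\in C: v \text{ touches } w\}$. In this setting, $T(v)$ is the same set for all $v\in\overline{C}$; this set is $\{x_1,x_2\}$ for two adjacent vertices $x_1,x_2$ of $C$. Moreover, each of $x_1,x_2$ has exactly one neighbor in each component of $G[\overline{C}]$. *)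

From mathcomp Require Import all_boot.
Set Implicit Arguments. Unset Strict Implicit. Unset Printing Implicit Defensive.

(* A simple graph: vertex type T : finType, adjacency e : rel T,
   assumed symmetric and irreflexive in the theorem. *)

Definition is_cycle (T : finType) (e : rel T) (c : seq T) : bool :=
  [&& uniq c, 3 <= size c & cycle e c].

Definition is_odd_cycle (T : finType) (e : rel T) (c : seq T) : bool :=
  is_cycle e c && odd (size c).

(* Edge set of a cycle, as a symmetric set of ordered pairs
   (each undirected edge {x,y} appears as (x,y) and (y,x)). *)
Definition cycle_edges (T : finType) (c : seq T) : {set T * T} :=
  [set p | [&& p.1 \in c, p.2 \in c & (next c p.1 == p.2) || (next c p.2 == p.1)]].

(* Class G*: any two distinct odd cycles share at most one (undirected) edge. *)
Definition in_Gstar (T : finType) (e : rel T) : Prop :=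
  forall c1 c2 : seq T, is_odd_cycle e c1 -> is_odd_cycle e c2 ->
    cycle_edges c1 != cycle_edges c2 ->
    #|cycle_edges c1 :&: cycle_edges c2| <= 2.

Definition connected_in (T : finType) (e : rel T) (S : {set T}) : Prop :=
  forall x y, x \in S -> y \in S ->
    connect [rel u v | [&& e u v, u \in S & v \in S]] x y.

Definition two_connected (T : finType) (e : rel T) : Prop :=
  [/\ 3 <= #|T|, connected_in e setT & forall v : T, connected_in e [set~ v]].

Definition longest_odd_cycle (T : finType) (e : rel T) (C : seq T) : Prop :=
  is_odd_cycle e C /\ forall c, is_odd_cycle e c -> size c <= size C.

Definition touches (T : finType) (e : rel T) (C : seq T) (v w : T) : Prop :=
  [/\ v \notin C, w \in C &
    exists p : seq T, [&& path e v p, uniq (v :: p), last v p == w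
                        & all (fun x => x \notin C) (belast v p)]].

Definition component_off (T : finType) (e : rel T) (C : seq T) (H : {set T}) : Prop :=
  [/\ H != set0, forall x, x \in H -> x \notin C, connected_in e H &
      forall x y, x \in H -> y \notin C -> e x y -> y \in H].

Definition seq_adj (T : eqType) (s : seq T) (x y : T) : bool :=
  [&& x \in s, y \in s &
     (index y s == (index x s).+1) || (index x s == (index y s).+1)].

Definition is_path_between (T : finType) (e : rel T) (H : {set T}) (a b : T) : Prop :=
  exists s : seq T,
    [/\ s != [::], uniq s, forall x, (x \in s) = (x \in H),
        head a s = a /\ last b s = b &
        forall x y, x \in H -> y \in H -> e x y = seq_adj s x y].

From mathcomp Require Import all_boot.

(* Call a detour the interior s of an x1,x2-path through H.  Since C is a
   longest odd cycle of a G* graph, it runs through the edge x1x2, and gluing s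
   to it gives a cycle of length |s| + |C|; by maximality |s| is odd, so
   x2 x1 s is an odd cycle.  Any two such cycles share the path x2 x1 v1, hence
   coincide in G*: all detours have the same vertex set.  So a detour has no
   chord and cannot be rerouted through H; with 2-connectivity this shows that it
   misses no vertex of H, because the H-neighbours of x1 and x2 lie on it. *)

Set Implicit Arguments. Unset Strict Implicit. Unset Printing Implicit Defensive.

Section SeqFacts.
Variable T : eqType.
Implicit Types (s A B M : seq T) (x y : T).

Lemma split_two_mem s x y : x \in s -> y \in s -> x != y ->
  exists A M B, s = A ++ x :: M ++ y :: B \/ s = A ++ y :: M ++ x :: B.
Proof.
case/splitPr=> A R; rewrite mem_cat inE => /orP[yA|/orP[/eqP->|yR]] xy.
- by case/splitPr: yA xy => A' M _; exists A', M, R; right; rewrite -catA.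
- by rewrite eqxx in xy.
- by case/splitPr: yR => M B; exists A, M, B; left.
Qed.

Lemma seq_adj_cat s1 s2 x y : uniq (s1 ++ x :: y :: s2) ->
  seq_adj (s1 ++ x :: y :: s2) x y && seq_adj (s1 ++ x :: y :: s2) y x.
Proof.
rewrite cat_uniq /= => /and4P[_ /norP[xs1 /norP[ys1 _]] /norP[xy _] _].
rewrite /seq_adj !index_cat (negbTE xs1) (negbTE ys1) /= eqxx eq_sym (negbTE xy).
by rewrite !mem_cat !inE !eqxx !orbT addn0 addn1 eqxx !orbT.
Qed.

Variable e : rel T.
Hypothesis e_sym : symmetric e.

Lemma path_seq_adj x0 s x y : path e x0 s -> seq_adj s x y -> e x y.
Proof.
move=> /(pathP x0) Ps /and3P[xs ys /orP[]] /eqP Eidx.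
- have := Ps (index y s); rewrite index_mem ys => /(_ isT).
  by rewrite (nth_index _ ys) {1}Eidx /= nth_index.
- have := Ps (index x s); rewrite index_mem xs => /(_ isT).
  by rewrite (nth_index _ xs) {1}Eidx /= nth_index // e_sym.
Qed.

Lemma path_rcons_rev x y s : path e y (rcons (rev s) x) = path e x (rcons s y).
Proof.
rewrite -rev_cons -(belast_rcons x s y) -{1}(last_rcons x s y) rev_path.
by apply: eq_path => u v; rewrite e_sym.
Qed.

End SeqFacts.

Section CycleEdges.
Variable T : finType.
Implicit Types (c : seq T) (u v w : T).

Lemma cycle_edges_eq_mem c1 c2 : cycle_edges c1 = cycle_edges c2 -> c1 =i c2.
Proof.
have edge_fst c z : z \in c -> (z, next c z) \in cycle_edges c.
  by move=> zc; rewrite inE /= zc mem_next zc eqxx.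
move=> E z; apply/idP/idP => /edge_fst.
- by rewrite E inE => /andP[].
- by rewrite -E inE => /andP[].
Qed.

Lemma prefix_cycle_edges u v w P : uniq (u :: v :: w :: P) ->
  {subset [:: (u, v); (v, u); (v, w)] <= cycle_edges (u :: v :: w :: P)}.
Proof.
rewrite /= !inE => /andP[/norP[uv _] _] p.
rewrite !inE => /or3P[] /eqP-> /=; rewrite !eqxx ?orbT //=.
by rewrite eq_sym in uv; rewrite (negbTE uv) eqxx.
Qed.

Variable e : rel T.

Lemma Gstar_shared_prefix u v w P1 P2 : in_Gstar e ->
  is_odd_cycle e (u :: v :: w :: P1) -> is_odd_cycle e (u :: v :: w :: P2) ->
  cycle_edges (u :: v :: w :: P1) = cycle_edges (u :: v :: w :: P2).
Proof.
move=> Gs o1 o2.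
(* edges are ordered pairs, so in_Gstar bounds the common ones by 2 *)
have [//|ne] := eqVneq (cycle_edges (u :: v :: w :: P1)) (cycle_edges (u :: v :: w :: P2)).
have := Gs _ _ o1 o2 ne; rewrite leqNgt => /negP[].
have /andP[/and3P[U1 _ _] _] := o1; have /andP[/and3P[U2 _ _] _] := o2.
have sub : [:: (u, v); (v, u); (v, w)] \subset
    cycle_edges (u :: v :: w :: P1) :&: cycle_edges (u :: v :: w :: P2).
  by apply/subsetP => p pE; rewrite inE !prefix_cycle_edges.
apply: leq_trans _ (subset_leq_card sub).
move: U1; rewrite /= !inE => /andP[/norP[uv /norP[uw _]] _].
by rewrite (card_uniqP _) //= !inE !xpair_eqE (negbTE uv) (negbTE uw) andbF.
Qed.

End CycleEdges.

Section OddCycles.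
Variables (T : finType) (e : rel T).
Hypotheses (e_sym : symmetric e) (e_irr : irreflexive e) (Gstar_e : in_Gstar e).
Implicit Types (c A B : seq T) (x y : T).

Lemma is_odd_cycle_rot n c : is_odd_cycle e (rot n c) = is_odd_cycle e c.
Proof. by rewrite /is_odd_cycle /is_cycle rot_uniq size_rot rot_cycle. Qed.

Lemma is_odd_cycle_rotr n c : is_odd_cycle e (rotr n c) = is_odd_cycle e c.
Proof. by rewrite /is_odd_cycle /is_cycle rotr_uniq size_rotr rotr_cycle. Qed.

Lemma is_odd_cycle_rev c : is_odd_cycle e (rev c) = is_odd_cycle e c.
Proof.
rewrite /is_odd_cycle /is_cycle rev_uniq size_rev rev_cycle.
by rewrite (@eq_cycle _ _ e) // => u v; rewrite e_sym.
Qed.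

Lemma odd_cycle_no_odd_chord x y A B : is_odd_cycle e (x :: A ++ y :: B) ->
  A != [::] -> B != [::] -> odd (size A) -> ~~ e x y.
Proof.
case: A => [//|a A]; case: B => [//|b B] oc _ _ oddA; apply/negP => exy.
(* the chord closes the odd cycle c1, which shares the path x a ... y with c *)
set c1 := x :: (a :: A) ++ [:: y].
have Ec : x :: (a :: A) ++ y :: b :: B = c1 ++ b :: B by rewrite /c1 /= -catA.
have [w [P E1]] : exists w P, c1 = x :: a :: w :: P.
  by case: A {oddA oc Ec} @c1 => [|w P]; [exists y, [::] | exists w, (P ++ [:: y])].
have /andP[/and3P[Uc _ Cc] _] := oc; rewrite Ec in oc Uc Cc.
have oc1 : is_odd_cycle e c1.
  apply/andP; split; [apply/and3P; split|].
  - by move: Uc; rewrite cat_uniq => /andP[].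
  - by rewrite E1.
  - move: Cc; rewrite /c1 /= rcons_cat !rcons_path !cat_path.
    by case/and3P=> -> -> _; rewrite last_cat /= e_sym exy.
  - by rewrite /c1 /= size_cat addn1 /= negbK.
rewrite E1 in oc oc1 Uc.
have := cycle_edges_eq_mem (Gstar_shared_prefix Gstar_e oc oc1) b.
rewrite !inE mem_cat !inE eqxx !orbT => /esym bP.
by move: Uc; rewrite cat_uniq => /and3P[_ /hasP[]]; exists b; rewrite ?inE ?eqxx.
Qed.

Lemma odd_cycle_edge_consecutive c x y : is_odd_cycle e c -> x \in c -> y \in c ->
  e x y -> exists B, is_odd_cycle e (x :: y :: B) /\ perm_eq (x :: y :: B) c.
Proof.
move=> oc xc yc exy; have [i r Er] := rot_to xc.
have {}oc : is_odd_cycle e (x :: r) by rewrite -Er is_odd_cycle_rot.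
have pc : perm_eq (x :: r) c by rewrite -Er perm_rot.
have yr : y \in r.
  move: yc; rewrite -(perm_mem pc) inE => /predU1P[yx|//].
  by move: exy; rewrite yx e_irr.
case/splitPr: yr oc pc => A B oc pc.
case: A oc pc => [|a A] oc pc; first by exists B.
case: B oc pc => [|b B] oc pc.
  exists (rev (a :: A)).
  have -> : x :: y :: rev (a :: A) = rotr 1 (rev (x :: (a :: A) ++ [:: y])).
    by rewrite (rev_cons x) rev_cat /= -rcons_cons rotr1_rcons.
  by rewrite is_odd_cycle_rotr is_odd_cycle_rev perm_rotr perm_rev.
exfalso; have [oddA | evenA] := boolP (odd (size (a :: A))).
  by move: exy; apply/negP; apply: odd_cycle_no_odd_chord oc _ _ oddA.
have oc' : is_odd_cycle e ((y :: b :: B) ++ x :: a :: A).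
  by rewrite -(rot_size_cat (x :: a :: A)) is_odd_cycle_rot.
have oddB : odd (size (b :: B)).
  have /andP[_] := oc; rewrite /= size_cat /= addnS /= oddD.
  by move: evenA => /=; case: (odd (size A)); case: (odd (size B)).
move: exy; apply/negP; rewrite e_sym.
exact: (@odd_cycle_no_odd_chord y x (b :: B) (a :: A) oc').
Qed.

End OddCycles.

Section Detours.
Variables (T : finType) (e : rel T) (C : seq T) (x1 x2 : T) (H : {set T}) (v1 v2 : T).
Hypotheses (e_sym : symmetric e) (e_irr : irreflexive e) (Gstar_e : in_Gstar e).
Hypothesis G_2conn : two_connected e.
Hypotheses (C_longest : longest_odd_cycle e C) (x1C : x1 \in C) (x2C : x2 \in C).
Hypothesis x1x2 : e x1 x2.
Hypothesis touches_C :
  forall v w, v \notin C -> w \in C -> touches e C v w <-> (w = x1 \/ w = x2).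
Hypothesis H_comp : component_off e C H.
Hypotheses (v1H : v1 \in H) (x1v1 : e x1 v1).
Hypothesis v1_unique : forall u, u \in H -> e x1 u -> u = v1.
Hypotheses (v2H : v2 \in H) (x2v2 : e x2 v2).
Hypothesis v2_unique : forall u, u \in H -> e x2 u -> u = v2.

Lemma H_notin_C x : x \in H -> x \notin C.
Proof. by case: H_comp => _ + _ _; apply. Qed.

Lemma x1_notin_H : x1 \notin H.
Proof. by apply: contraL x1C; apply: H_notin_C. Qed.

Lemma x2_notin_H : x2 \notin H.
Proof. by apply: contraL x2C; apply: H_notin_C. Qed.

Lemma H_nbr_in_C h w : h \in H -> w \in C -> e h w -> w = x1 \/ w = x2.
Proof.
move=> hH wC ehw; have hC := H_notin_C hH.
have hw : h != w by apply: contraNneq hC => ->.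
apply/(touches_C hC wC); split=> //; exists [:: w].
by rewrite /= ehw inE hw eqxx hC.
Qed.

Lemma H_nbr_x1 h : h \in H -> e h x1 -> h = v1.
Proof. by move=> hH; rewrite e_sym; apply: v1_unique. Qed.

Lemma H_nbr_x2 h : h \in H -> e h x2 -> h = v2.
Proof. by move=> hH; rewrite e_sym; apply: v2_unique. Qed.

Lemma path_off_C_in_H h p :
  h \in H -> path e h p -> all [predC C] p -> {subset p <= H}.
Proof.
case: H_comp => _ _ _ closedH.
elim: p h => //= y p IHp h hH /andP[ehy Pp] /andP[yC Ap].
have yH : y \in H by apply: closedH ehy.
by move=> z; rewrite inE => /predU1P[-> //|/(IHp y yH Pp Ap)].
Qed.

Definition detour (s : seq T) : Prop :=
  [/\ path e x1 s, uniq s, {subset s <= H}, s != [::] & e (last x1 s) x2].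

Lemma detour_head s : detour s -> exists t, s = v1 :: t.
Proof.
case: s => [|h t] [Ps _ sH //] _ _; exists t.
by rewrite (H_nbr_x1 (sH h (mem_head _ _))) // e_sym; case/andP: Ps.
Qed.

Lemma detour_last s : detour s -> last x1 s = v2.
Proof.
move=> D; have [t Es] := detour_head D; case: D => _ _ sH _ ex2.
by apply: H_nbr_x2 ex2; apply: sH; rewrite Es /= mem_last.
Qed.

Lemma detour_ends s : detour s -> v1 \in s /\ v2 \in s.
Proof.
move=> D; have [t Es] := detour_head D; rewrite -(detour_last D) Es mem_head.
by split=> //=; apply: mem_last.
Qed.

Lemma detour_exists : exists s, detour s.
Proof.
case: H_comp => _ _ connH _; have /connectP[p Pp Lp] := connH v1 v2 v1H v2H.
case: (shortenP Pp) Lp => p' Pp' Up' _ Lp.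
exists (v1 :: p'); split => //=.
- by rewrite x1v1; apply: sub_path Pp' => u v /and3P[].
- move=> z; rewrite inE => /predU1P[-> //|].
  elim: p' v1 Pp' {Up' Lp} => //= y q IHq u /andP[/and3P[_ _ yH] /IHq Hq].
  by rewrite inE => /predU1P[-> //|/Hq].
- by rewrite -Lp e_sym.
Qed.

Lemma detour_odd_size s : detour s -> odd (size s).
Proof.
case=> Ps Us sH s0 ex2; apply/negPn/negP => even_s.
have [B [oB pB]] :=
  odd_cycle_edge_consecutive e_sym e_irr Gstar_e C_longest.1 x1C x2C x1x2.
have /andP[/and3P[UB _ cB] oddB] := oB.
have sB : ~~ has (mem s) (x1 :: x2 :: B).
  apply/hasPn => z; rewrite (perm_mem pB) => zC.
  by apply: contraL zC => /sH/H_notin_C.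
have oc : is_odd_cycle e (x1 :: s ++ x2 :: B).
  apply/andP; split; [apply/and3P; split|].
  - by rewrite -cat1s uniq_catCA cat_uniq Us; apply/and3P.
  - by rewrite /= size_cat /= addnS !ltnS addn_gt0 lt0n size_eq0 s0.
  - move: cB; rewrite /= rcons_cat cat_path /= => /andP[_ ->].
    by rewrite Ps ex2.
  - by rewrite /= size_cat /= addnS /= oddD (negbTE even_s) in oddB *.
have := C_longest.2 _ oc; rewrite -(perm_size pB) /= size_cat /= !ltnS.
by rewrite -[X in _ <= X]add0n leq_add2r leqn0 size_eq0 (negbTE s0).
Qed.

Lemma detour_odd_cycle s : detour s -> is_odd_cycle e (x2 :: x1 :: s).
Proof.
move=> D; have odd_s := detour_odd_size D; case: D => Ps Us sH s0 ex2.
have x1s : x1 \notin s by apply: contra x1_notin_H; apply: sH.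
have x2s : x2 \notin s by apply: contra x2_notin_H; apply: sH.
have x21 : x2 != x1 by apply: contraTneq x1x2 => ->; rewrite e_irr.
apply/andP; split; [apply/and3P; split|] => //=.
- by rewrite inE negb_or x21 x2s x1s Us.
- by rewrite !ltnS lt0n size_eq0.
- by rewrite e_sym x1x2 rcons_path Ps ex2.
- by rewrite negbK.
Qed.

Lemma detour_mem s s' : detour s -> detour s' -> s =i s'.
Proof.
suff sub u u' : detour u -> detour u' -> {subset u <= u'}.
  by move=> D D' z; apply/idP/idP; apply: sub.
move=> D D' z zu; have zH : z \in H by case: D => _ _ uH _ _; apply: uH.
have [[t Et] [t' Et']] := (detour_head D, detour_head D').
have oc := detour_odd_cycle D; have oc' := detour_odd_cycle D'.
rewrite Et in oc; rewrite Et' in oc'.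
have := cycle_edges_eq_mem (Gstar_shared_prefix Gstar_e oc oc') z.
rewrite -Et -Et' !inE zu !orbT => /esym/or3P[/eqP zx2 | /eqP zx1 | //].
- by move: x2_notin_H; rewrite -zx2 zH.
- by move: x1_notin_H; rewrite -zx1 zH.
Qed.

Lemma detour_splice A a M b B E :
  detour (A ++ a :: M ++ b :: B) -> path e a (rcons E b) -> uniq E ->
  {subset E <= [predD H & A ++ a :: M ++ b :: B]} -> M = [::] /\ E = [::].
Proof.
(* s' is a detour again, hence has the same vertices as s *)
set s := A ++ a :: M ++ b :: B => D PE UE EHs.
set s' := A ++ a :: E ++ b :: B; set R := A ++ a :: b :: B.
have perm_mid X : perm_eq (A ++ a :: X ++ b :: B) (X ++ R).
  by rewrite -[a :: X ++ _]cat1s catA perm_catCA -catA.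
have [Ps Us sH s0 ex2] := D.
have UR : uniq R by move: Us; rewrite (perm_uniq (perm_mid M)) cat_uniq => /and3P[].
have Rs : {subset R <= s} by move=> z zR; rewrite (perm_mem (perm_mid M)) mem_cat zR orbT.
have ER : ~~ has (mem E) R.
  by apply/hasPn => z /Rs zs; apply: contraL zs => /EHs; rewrite inE => /andP[].
have D' : detour s'.
  split.
  - move: Ps; rewrite /s !cat_path /= cat_path /= => /and5P[-> -> _ _ Pb].
    by rewrite -cat_rcons cat_path last_rcons PE Pb.
  - by rewrite (perm_uniq (perm_mid E)) cat_uniq UE UR ER.
  - move=> z; rewrite (perm_mem (perm_mid E)) mem_cat => /orP[/EHs | /Rs /sH //].
    by rewrite inE => /andP[].
  - by rewrite /s'; case: (A).
  - by move: ex2; rewrite /s /s' -!cat_rcons !last_cat !last_rcons.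
have ME : perm_eq M E.
  have ss' : perm_eq s s' by apply: uniq_perm (detour_mem D D') => //; case: D'.
  by rewrite -(perm_cat2r R) -(permPl (perm_mid M)) -(permPr (perm_mid E)).
have noM m : m \in M -> False.
  move=> mM; have /EHs : m \in E by rewrite -(perm_mem ME).
  by rewrite inE mem_cat inE mem_cat mM !orbT.
have M0 : M = [::] by case: (M) noM => // m M' /(_ m (mem_head _ _)).
by split => //; apply/nilP; rewrite /nilp -(perm_size ME) M0.
Qed.

Lemma detour_no_bypass s a b E : detour s -> a \in s -> b \in s -> a != b ->
  path e a (rcons E b) -> uniq E -> {subset E <= [predD H & s]} -> E = [::].
Proof.
move=> D sa sb ab PE UE EHs.
have [A [M [B [Es|Es]]]] := split_two_mem sa sb ab; rewrite Es in D EHs.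
  by case: (detour_splice D PE UE EHs).
have [] := detour_splice (E := rev E) D.
- by rewrite path_rcons_rev.
- by rewrite rev_uniq.
- by move=> z; rewrite mem_rev; apply: EHs.
- by move=> _ /(congr1 rev); rewrite revK.
Qed.

Lemma detour_chordless A a M b B :
  detour (A ++ a :: M ++ b :: B) -> e a b -> M = [::].
Proof. by move=> D eab; case: (detour_splice (E := [::]) D) => //=; rewrite eab. Qed.

Lemma detour_exit s h : detour s -> h \in H -> h \notin s ->
  exists k w, [/\ k \in H, k \notin s, w \in s & e k w].
Proof.
move=> D hH hs; have [v1s _] := detour_ends D.
case: H_comp => _ _ connH _; have /connectP[p Pp Lp] := connH h v1 hH v1H.
have hasp : has (mem s) p.
  have := mem_last h p; rewrite -Lp inE => /predU1P[v1h | v1p].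
    by rewrite -v1h v1s in hs.
  by apply/hasP; exists v1.
move: Pp; case/split_find: hasp => w q p2 ws /hasPn qs.
rewrite cat_path rcons_path => /andP[/andP[_ /and3P[ekw kH _]] _].
exists (last h q), w; split=> //.
by have := mem_last h q; rewrite inE => /predU1P[-> // | /qs].
Qed.

Lemma detour_nbr_notin_C s u z :
  detour s -> u \in H -> u \notin s -> e u z -> z \notin C.
Proof.
move=> D uH us euz; have [v1s v2s] := detour_ends D.
apply/negP => /(H_nbr_in_C uH)/(_ euz) [zx1 | zx2].
- by rewrite (H_nbr_x1 uH) -?zx1 ?v1s in us.
- by rewrite (H_nbr_x2 uH) -?zx2 ?v2s in us.
Qed.

Lemma detour_bypass s k w : detour s -> k \in H -> k \notin s -> w \in s -> e k w ->
  exists q z, [/\ path e w (rcons (k :: q) z), uniq (k :: q),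
                  {subset k :: q <= [predD H & s]}, z \in s & z != w].
Proof.
move=> D kH ks ws ekw; have [_ _ sH _ _] := D.
have kC := H_notin_C kH.
case: G_2conn => _ _ /(_ w) conn_w.
have kw : k \in [set~ w] by rewrite !inE; apply: contraNneq ks => ->.
have x1w : x1 \in [set~ w] by rewrite !inE; apply: contraNneq x1_notin_H => ->; apply: sH.
have /connectP[r Pr Lr] := conn_w k x1 kw x1w.
case: (shortenP Pr) Lr => {Pr}r Pr Ur _ Lr.
have has_sC : has [predU mem s & mem C] r.
  apply/hasP; exists x1; last by rewrite inE /= x1C orbT.
  by move: (mem_last k r); rewrite -Lr inE => /predU1P[x1k|//]; rewrite -x1k x1C in kC.
move: Pr Ur; case/split_find: has_sC => z q r2 sCz /hasPn sCq.
rewrite cat_path rcons_path -cat_cons cat_uniq -rcons_cons rcons_uniq.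
case/andP=> /andP[Pq Ruz] _ /and3P[/andP[_ Ukq] _ _].
have /and3P[euz _] := Ruz; rewrite !inE => zw.
have {}Pq : path e k q by apply: sub_path Pq => ? ? /and3P[].
have kqHs : {subset k :: q <= [predD H & s]}.
  have qsC y : y \in q -> (y \notin s) && (y \notin C).
    by move/sCq; rewrite !inE negb_or.
  have qH : {subset q <= H}.
    by apply: path_off_C_in_H kH Pq _; apply/allP => y /qsC /andP[].
  move=> y; rewrite !inE => /predU1P[-> | yq]; first by rewrite ks kH.
  by have /andP[-> _] := qsC y yq; rewrite qH.
have /andP[us uH] : last k q \in [predD H & s] by apply/kqHs/mem_last.
have zs : z \in s.
  by case/orP: sCz => // zC; case/negP: (detour_nbr_notin_C D uH us euz).
by exists q, z; split; rewrite //= e_sym ekw rcons_path Pq euz.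
Qed.

Lemma detour_cover s h : detour s -> h \in H -> h \in s.
Proof.
move=> D hH; apply/contraT => hs.
have [k [w [kH ks ws ekw]]] := detour_exit D hH hs.
have [q [z [Pwz Ukq kqHs zs zw]]] := detour_bypass D kH ks ws ekw.
by have := detour_no_bypass D ws zs _ Pwz Ukq kqHs; rewrite eq_sym zw => /(_ isT).
Qed.

Lemma detour_adj s x y : detour s -> x \in H -> y \in H -> e x y = seq_adj s x y.
Proof.
move=> D xH yH; have [Ps Us _ _ _] := D.
apply/idP/idP => [exy | /(path_seq_adj e_sym Ps) //].
have xy : x != y by apply: contraTneq exy => ->; rewrite e_irr.
have [A [M [B [Es|Es]]]] := split_two_mem (detour_cover D xH) (detour_cover D yH) xy.
- rewrite Es in D Us *; rewrite (detour_chordless D exy) in Us *.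
  by case/andP: (seq_adj_cat Us).
- rewrite e_sym in exy; rewrite Es in D Us *; rewrite (detour_chordless D exy) in Us *.
  by case/andP: (seq_adj_cat Us).
Qed.

Lemma component_path_between : is_path_between e H v1 v2.
Proof.
have [s D] := detour_exists; have [t Es] := detour_head D.
have [_ Us sH s0 _] := D.
exists s; split=> //.
- by move=> z; apply/idP/idP => [/sH | /(detour_cover D)].
- by rewrite Es; split=> //; have := detour_last D; rewrite Es.
- by move=> x y xH yH; apply: detour_adj.
Qed.

End Detours.

Theorem mainTheorem10 (T : finType) (e : rel T) (C : seq T)
    (x1 x2 : T) (H : {set T}) (v1 v2 : T) :
  symmetric e -> irreflexive e ->
  in_Gstar e -> two_connected e ->
  longest_odd_cycle e C -> 5 <= size C ->
  (exists v : T, v \notin C) ->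
  x1 \in C -> x2 \in C -> e x1 x2 ->
  (forall v w, v \notin C -> w \in C -> touches e C v w <-> (w = x1 \/ w = x2)) ->
  component_off e C H ->
  v1 \in H -> e x1 v1 -> (forall u, u \in H -> e x1 u -> u = v1) ->
  v2 \in H -> e x2 v2 -> (forall u, u \in H -> e x2 u -> u = v2) ->
  is_path_between e H v1 v2.
Proof.
(* |C| >= 5 and the nonempty complement of C only serve to derive the
   standing facts about x1 and x2, which are hypotheses here. *)
move=> e_sym e_irr Gstar_e G_2conn C_longest _ _.
exact: component_path_between.
Qed.
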